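(* Let $p\geq 3$ be a prime and let $H=(a_1,\dots,a_p)^\perp\subset\mathbb{R}^p$ be a hyperplane. Assume there exists $i$ such that $a_j\neq a_i$ for all $j\neq i$. Then $|H\cap S_pv|\leq (p-1)!$ for all $v\in\mathbb{R}^p$ with pairwise distinct coordinates.
   Context: $S_p$ acts on $\mathbb{R}^p$ by permuting coordinates and $S_pv$ is the orbit of $v$. $(a_1,\dots,a_p)^\perp$ denotes the hyperplane $\{x:\sum_m a_mx_m=0\}$ with $(a_1,\dots,a_p)\neq 0$. *)

From mathcomp Require Import all_boot all_order all_algebra all_fingroup.
From mathcomp Require Import reals.
Set Implicit Arguments. Unset Strict Implicit. Unset Printing Implicit Defensive.
Import Order.TTheory GRing.Theory Num.Theory.
Local Open Scope ring_scope.

Definition perm_act (R : realType) (p : nat) (s : 'S_p) (v : 'rV[R]_p) : 'rV[R]_p :=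
  \row_m v 0 ((s^-1)%g m).

Definition orbit_vec (R : realType) (p : nat) (v : 'rV[R]_p) : seq 'rV[R]_p :=
  undup [seq perm_act s v | s <- enum 'S_p].

Definition in_hyperplane (R : realType) (p : nat) (a x : 'rV[R]_p) : bool :=
  \sum_(m < p) a 0 m * x 0 m == 0.

Definition card_hyp_orbit (R : realType) (p : nat) (a v : 'rV[R]_p) : nat :=
  size [seq x <- orbit_vec v | in_hyperplane a x].

From mathcomp Require Import all_boot all_order all_algebra all_fingroup.
From mathcomp Require Import reals.
Set Implicit Arguments. Unset Strict Implicit. Unset Printing Implicit Defensive.
Import Order.TTheory GRing.Theory Num.Theory.
Local Open Scope ring_scope.

(* Put f(t) = \sum_m a_m v_(t m); every point of S_p v on H comes from a zero
   of f on S_p.  Let v_(i0) be the smallest coordinate of v and, with i the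
   index such that a_j <> a_i for j <> i, split the positions other than i into
   U = {j | a_j > a_i} and L = {j | a_j < a_i}.
   Every t can be lowered to a K with K i = i0 by repeatedly moving a smaller
   value to position i, keeping the values off U (or off L) fixed and the
   relative order of the values on U (or L).  Lowering along U can only
   increase f and along L only decrease it, in both cases strictly unless
   nothing moves; hence each K with K i = i0, of which there are (p-1)!, is the
   lowering of at most one zero of f. *)

Section SamePattern.
Variables (R : realDomainType) (T : finType) (V : T -> R) (i : T) (P : pred T).
Implicit Types s t u : {perm T}.

Definition same_pattern s t :=
  [forall m, (m != i) && (m \notin P) ==> (s m == t m)] &&
  [forall j, forall k, (j \in P) && (k \in P) ==>
     ((V (s j) < V (s k)) == (V (t j) < V (t k)))].

Lemma same_patternP s t :
  reflect ((forall m, m != i -> m \notin P -> s m = t m) /\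
           {in P &, forall j k, (V (s j) < V (s k)) = (V (t j) < V (t k))})
          (same_pattern s t).
Proof.
apply: (iffP andP) => [[/forallP off /forallP on]|[off on]]; split.
- by move=> m mi mP; apply/eqP/(implyP (off m)); rewrite mi.
- by move=> j k jP kP; apply/eqP/(implyP (forallP (on j) k)); rewrite jP.
- by apply/forallP=> m; apply/implyP=> /andP[mi mP]; rewrite off.
- by do 2 apply/forallP=> ?; apply/implyP=> /andP[jP kP]; rewrite on.
Qed.

Lemma same_pattern_refl t : same_pattern t t.
Proof. by apply/same_patternP. Qed.

Lemma same_pattern_sym s t : same_pattern s t -> same_pattern t s.
Proof.
case/same_patternP=> off on; apply/same_patternP; split=> [m mi mP|j k jP kP].
  by rewrite off.
by rewrite on.
Qed.

Lemma same_pattern_trans s t u :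
  same_pattern s t -> same_pattern t u -> same_pattern s u.
Proof.
case/same_patternP=> off1 on1 /same_patternP[off2 on2].
apply/same_patternP; split=> [m mi mP|j k jP kP].
  by rewrite off1 ?off2.
by rewrite on1 ?on2.
Qed.

(* [s] and [t] have equally many positions carrying a value below [V (t j)];
   lowering the value at [i] must therefore raise every value on [P]. *)
Lemma same_pattern_le s t : same_pattern s t -> V (s i) <= V (t i) ->
  {in P, forall j, V (t j) <= V (s j)}.
Proof.
case/same_patternP=> off on le_i j jP; rewrite leNgt; apply/negP=> lt_j.
pose below u := [set m | V (u m) < V (t j)].
have card_below u : #|below u| = #|[set k | V k < V (t j)]|.
  rewrite -(card_preimset [set k | V k < V (t j)] (@perm_inj _ u)).
  by apply: eq_card => m; rewrite !inE.
have : below t \proper below s.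
  apply/properP; split; last by exists j; rewrite !inE ?lt_j ?ltxx.
  apply/subsetP=> m; rewrite !inE => lt_m.
  have [mP|mNP] := boolP (m \in P).
    by apply: lt_trans lt_j; rewrite on.
  have [mi|mi] := eqVneq m i; first by subst m; exact: le_lt_trans le_i lt_m.
  by rewrite off.
by move/proper_card; rewrite !card_below ltnn.
Qed.

End SamePattern.

Section DescentToMinimum.
Variables (R : realDomainType) (T : finType) (V : T -> R) (i i0 : T) (P : pred T).
Hypotheses (V_inj : injective V) (i0_min : forall k, V i0 <= V k) (iNP : i \notin P).
Implicit Type t : {perm T}.

(* Swap the value at [i] with the largest value below it that sits on [P]. *)
Lemma swap_down t : t i != i0 -> (t^-1)%g i0 \in [predU1 i & P] ->
  exists t', [/\ same_pattern V i P t' t, (t'^-1)%g i0 \in [predU1 i & P]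
               & V (t' i) < V (t i)].
Proof.
move=> ti0; set j0 := (t^-1)%g i0 => j0iP.
have tj0 : t j0 = i0 by rewrite permKV.
have j0P : j0 \in P.
  by case/predU1P: j0iP => // j0i; rewrite -tj0 j0i eqxx in ti0.
have lt_j0 : V (t j0) < V (t i).
  by rewrite lt_neqAle tj0 i0_min andbT (inj_eq V_inj) eq_sym.
pose below_i := [pred k | (k \in P) && (V (t k) < V (t i))].
have below_j0 : below_i j0 by rewrite inE j0P.
have [j /andP[jP lt_j] max_j] := arg_maxP (V \o t) below_j0.
have le_j k : k \in P -> V (t k) < V (t i) -> V (t k) <= V (t j).
  by move=> kP lt_k; apply: max_j; rewrite inE kP.
have neq_t k l : k != l -> V (t k) != V (t l).
  by rewrite (inj_eq V_inj) (inj_eq (@perm_inj _ t)).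
have i_neq k : k \in P -> i != k by move=> kP; apply: contraNneq iNP => ->.
have below_i_j k : k \in P -> k != j -> (V (t k) < V (t i)) = (V (t k) < V (t j)).
  move=> kP kj; apply/idP/idP => [lt_ki|lt_kj]; last exact: lt_trans lt_kj lt_j.
  by rewrite lt_neqAle neq_t // le_j.
have above_i_j k : k \in P -> (V (t i) < V (t k)) = (V (t j) < V (t k)).
  move=> kP; apply/idP/idP => [lt_ik|lt_jk]; first exact: lt_trans lt_j lt_ik.
  have [lt_ki|le_ik] := ltP (V (t k)) (V (t i)).
    by have := le_j k kP lt_ki; rewrite leNgt lt_jk.
  by rewrite lt_neqAle le_ik neq_t ?i_neq.
pose t' := (tperm i j * t)%g.
have t'E m : t' m = t (tperm i j m) by rewrite permM.
have t'P k : k \in P -> t' k = if k == j then t i else t k.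
  move=> kP; rewrite t'E; have [->|kj] := eqVneq k j; first by rewrite tpermR.
  by rewrite tpermD //; [exact: i_neq | rewrite eq_sym].
exists t'; split.
- apply/same_patternP; split=> [m mi mP|k l kP lP].
    by rewrite t'E tpermD // eq_sym //; apply: contraNneq mP => ->.
  rewrite !t'P //.
  by have [-> | kj] := eqVneq k j; have [-> | lj] := eqVneq l j;
    rewrite ?ltxx ?above_i_j ?below_i_j.
- rewrite invMg tpermV permM -/j0.
  by case: tpermP => [_|_|_ _]; rewrite !inE ?eqxx ?jP ?orbT.
- by rewrite t'E tpermL.
Qed.

Lemma exists_pattern_at_min t : (t^-1)%g i0 \in [predU1 i & P] ->
  exists2 K : {perm T}, K i = i0 & same_pattern V i P K t.
Proof.
have [n] := ubnP #|[set k | V k < V (t i)]|; elim: n t => // n IHn t lt_n inv.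
have [ti0|ti0] := eqVneq (t i) i0; first by exists t; rewrite ?same_pattern_refl.
have [t' [pat' inv' lt_i]] := swap_down ti0 inv.
have [|K Ki patK] := IHn t' _ inv'.
  apply: (@leq_trans #|[set k | V k < V (t i)]|); last by rewrite -ltnS.
  apply: proper_card; apply/properP; split.
    by apply/subsetP=> k; rewrite !inE => /lt_trans; apply.
  by exists (t' i); rewrite !inE ?lt_i ?ltxx.
by exists K; last exact: same_pattern_trans patK pat'.
Qed.

End DescentToMinimum.

Lemma perm_eq_off1 (T : finType) (i : T) (s t : {perm T}) :
  (forall m, m != i -> s m = t m) -> s = t.
Proof.
move=> eq_off; apply/permP=> m; have [->|] := eqVneq m i; last exact: eq_off.
set k := (t^-1)%g (s i); have tk : t k = s i by rewrite permKV.
have [ki|ki] := eqVneq k i; first by rewrite -tk ki.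
by move: tk; rewrite -eq_off // => /perm_inj ik; rewrite ik eqxx in ki.
Qed.

Section PermDot.
Variables (R : realDomainType) (T : finType).
Implicit Types (A B V : T -> R) (i : T) (s t : {perm T}).

Definition permdot A V t := \sum_m A m * V (t m).

Definition above B i : pred T := [pred j | B i < B j].

Lemma notin_above B i : i \notin above B i.
Proof. by rewrite inE ltxx. Qed.

Lemma permdotN A V t : permdot (fun m => - A m) V t = - permdot A V t.
Proof. by rewrite /permdot -sumrN; apply: eq_bigr => m _; rewrite mulNr. Qed.

Lemma sum_perm V t : \sum_m V (t m) = \sum_m V m.
Proof. by rewrite [RHS](reindex_inj (@perm_inj _ t)). Qed.

(* Since [\sum_m V (s m) = \sum_m V (t m)], the difference of the two sums is
   [\sum_m (A m - A i) * (V (s m) - V (t m))], whose terms are all nonnegative. *)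
Lemma permdot_pattern_leif A V i s t : injective V ->
  same_pattern V i (above A i) s t -> V (s i) <= V (t i) ->
  permdot A V t <= permdot A V s ?= iff (s == t).
Proof.
move=> V_inj pat le_i; have /same_patternP[off _] := pat.
pose d m := (A m - A i) * (V (s m) - V (t m)).
have d_ge0 m : 0 <= d m.
  have [mP|mNP] := boolP (m \in above A i).
    by rewrite mulr_ge0 // subr_ge0 ?(ltW mP) ?(same_pattern_le pat le_i).
  have [->|mi] := eqVneq m i; first by rewrite /d subrr mul0r.
  by rewrite /d off // subrr mulr0.
have diff : permdot A V s - permdot A V t = \sum_m d m.
  rewrite /d; under [RHS]eq_bigr do rewrite mulrBl.
  rewrite sumrB -mulr_sumr sumrB !sum_perm subrr mulr0 subr0 /permdot -sumrB.
  by apply: eq_bigr => m _; rewrite mulrBr.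
split; first by rewrite -subr_ge0 diff sumr_ge0.
apply/idP/eqP=> [|->]; last by rewrite eqxx.
rewrite eq_sym -subr_eq0 diff => /eqP/(psumr_eq0P (fun m _ => d_ge0 m)) d0.
apply: (perm_eq_off1 (i := i)) => m mi; have [mP|mNP] := boolP (m \in above A i).
  have /eqP := d0 m isT; rewrite mulf_eq0 subr_eq0 => /orP[/eqP eqA|].
    by move: mP; rewrite inE eqA ltxx.
  by rewrite subr_eq0 (inj_eq V_inj) => /eqP.
exact: off.
Qed.

Lemma permdot_pattern_inj A V i s t : injective V ->
  same_pattern V i (above A i) s t -> permdot A V s = permdot A V t -> s = t.
Proof.
move=> V_inj pat eq_st; have [le_i|/ltW le_i] := leP (V (s i)) (V (t i)).
  by apply/eqP; rewrite -(eq_leif (permdot_pattern_leif V_inj pat le_i)) eq_st.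
apply/esym/eqP.
by rewrite -(eq_leif (permdot_pattern_leif V_inj (same_pattern_sym pat) le_i)) eq_st.
Qed.

End PermDot.

Lemma card_perm_at (T : finType) (x y : T) :
  #|[set s : {perm T} | s x == y]| = (#|T|.-1)`!.
Proof.
have -> : [set s : {perm T} | s x == y] = ([set s in perm_on [set~ x]] :* tperm x y)%g.
  apply/setP=> s; rewrite mem_rcoset tpermV !inE; apply/eqP/idP=> [sx|fix_x].
    apply/subsetP=> z; rewrite in_setC1 unfold_in /= permM.
    by apply: contra => /eqP->; rewrite sx tpermR.
  have sx : (s * tperm x y)%g x = x by apply: out_perm fix_x _; rewrite !inE eqxx.
  by rewrite permM in sx; rewrite -(tpermK x y (s x)) sx tpermL.
by rewrite card_rcoset cardsE card_perm cardsC1.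
Qed.

Section Lowering.
Variables (R : realDomainType) (T : finType) (A V : T -> R) (i i0 : T).
Hypotheses (V_inj : injective V) (i0_min : forall k, V i0 <= V k)
  (A_sep : forall j, j != i -> A j != A i).
Implicit Types t K : {perm T}.
Local Notation nA := (fun m => - A m).

Definition lowering t K := (K i == i0) &&
  (same_pattern V i (above A i) K t || same_pattern V i (above nA i) K t).

Lemma exists_lowering t : exists K, lowering t K.
Proof.
set j0 := (t^-1)%g i0.
have [hi|lo] := boolP (j0 \in [predU1 i & above A i]).
  have [K Ki pat] := exists_pattern_at_min V_inj i0_min (notin_above A i) hi.
  by exists K; rewrite /lowering Ki eqxx pat.
have lo' : j0 \in [predU1 i & above nA i].
  move: lo; rewrite !inE ltrN2 negb_or => /andP[j0i not_hi].
  by rewrite (negbTE j0i) /= ltNge le_eqVlt negb_or not_hi andbT eq_sym A_sep.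
have [K Ki pat] := exists_pattern_at_min V_inj i0_min (notin_above nA i) lo'.
by exists K; rewrite /lowering Ki eqxx pat orbT.
Qed.

Definition lower t := xchoose (exists_lowering t).

Lemma lowerP t : lowering t (lower t).
Proof. exact: xchooseP. Qed.

Lemma lower_leif B t K : K i = i0 -> same_pattern V i (above B i) K t ->
  permdot B V t <= permdot B V K ?= iff (K == t).
Proof. by move=> Ki pat; apply: permdot_pattern_leif V_inj pat _; rewrite Ki. Qed.

(* [permdot A V t1 <= permdot A V K <= permdot A V t2], so [K] is a zero too. *)
Lemma lowering_mixed_zeros t1 t2 K : K i = i0 ->
  permdot A V t1 = 0 -> permdot A V t2 = 0 ->
  same_pattern V i (above A i) K t1 -> same_pattern V i (above nA i) K t2 ->
  t1 = t2.
Proof.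
move=> Ki z1 z2 pat1 pat2.
have [le1 eq1] := lower_leif Ki pat1; have [le2 eq2] := lower_leif Ki pat2.
rewrite !permdotN lerN2 z2 in le2; rewrite z1 in le1.
have K0 : permdot A V K = 0 by apply/le_anti; rewrite le1 le2.
have /eqP <- : K == t1 by rewrite -eq1 z1 K0.
by apply/eqP; rewrite -eq2 !permdotN z2 K0.
Qed.

Lemma lower_inj_zeros : {in [set t | permdot A V t == 0] &, injective lower}.
Proof.
move=> t1 t2; rewrite !inE => /eqP z1 /eqP z2 eq_low.
have eq_nA : permdot nA V t1 = permdot nA V t2 by rewrite !permdotN z1 z2.
have /andP[/eqP Ki /orP[hi1|lo1]] := lowerP t1;
  move: (lowerP t2); rewrite -eq_low => /andP[_ /orP[hi2|lo2]].
- apply: permdot_pattern_inj V_inj (same_pattern_trans (same_pattern_sym hi1) hi2) _.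
  by rewrite z1 z2.
- exact: lowering_mixed_zeros Ki z1 z2 hi1 lo2.
- exact/esym/(lowering_mixed_zeros Ki z2 z1 hi2 lo1).
- exact: permdot_pattern_inj V_inj (same_pattern_trans (same_pattern_sym lo1) lo2) eq_nA.
Qed.

Lemma card_permdot_eq0 : (#|[set t | permdot A V t == 0%R]| <= (#|T|.-1)`!)%N.
Proof.
rewrite -(card_in_imset lower_inj_zeros) -(card_perm_at i i0).
apply: subset_leq_card; apply/subsetP=> _ /imsetP[t _ ->].
by rewrite inE; case/andP: (lowerP t).
Qed.

End Lowering.

Lemma in_hyperplane_perm_act (R : realType) (p : nat) (a v : 'rV[R]_p) (s : 'S_p) :
  in_hyperplane a (perm_act s v) = (permdot (a 0) (v 0) (s^-1)%g == 0).
Proof. by rewrite /in_hyperplane /permdot; under eq_bigr do rewrite mxE. Qed.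

Lemma card_hyp_orbit_le (R : realType) (p : nat) (a v : 'rV[R]_p) :
  (card_hyp_orbit a v <= #|[set s : 'S_p | permdot (a 0%R) (v 0%R) s == 0%R]|)%N.
Proof.
rewrite /card_hyp_orbit /orbit_vec filter_undup.
apply: leq_trans (size_undup _) _; rewrite filter_map size_map.
have /card_uniqP <- :=
  filter_uniq (fun s => in_hyperplane a (perm_act s v)) (enum_uniq 'S_p).
rewrite -(card_preimset _ (@invg_inj _)); apply: eq_leq; apply: eq_card => s.
by rewrite mem_filter mem_enum andbT !inE in_hyperplane_perm_act.
Qed.

Theorem corollary4p2 (R : realType) (p : nat) (a : 'rV[R]_p) :
  prime p -> (3 <= p)%N -> a != 0 ->
  (exists i : 'I_p, forall j : 'I_p, j != i -> a 0 j != a 0 i) ->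
  forall v : 'rV[R]_p, injective (fun m : 'I_p => v 0 m) ->
  (card_hyp_orbit a v <= (p.-1)`!)%N.
Proof.
move=> _ _ _ [i a_sep] v v_inj.
have [i0 _ i0_min] := @arg_minP _ _ _ i xpredT (v 0) isT.
apply: leq_trans (card_hyp_orbit_le a v) _.
by have := card_permdot_eq0 v_inj (fun k => i0_min k isT) a_sep; rewrite card_ord.
Qed.
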